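(* Let $\mathbb{K}$ be an infinite field of characteristic zero, let $G$ be a bipartite graph on $n\ge 5$ vertices and $w(G)$ its whiskered graph, on vertex set $[2n]$. Write $J(w(G))=(x_{i_{1,1}}\cdots x_{i_{1,r_1}},\dots,x_{i_{s,1}}\cdots x_{i_{s,r_s}})\subset\mathbb{K}[x_1,\dots,x_{2n}]$ and let $\Delta=\langle\{i_{1,1},\dots,i_{1,r_1}\},\dots,\{i_{s,1},\dots,i_{s,r_s}\}\rangle$. Then $A(\Delta)$ is a level monomial algebra that fails the strong Lefschetz property.
   Context: The whiskered graph $w(G)$ of a graph $G$ with vertices $v_1,\dots,v_n$ has vertex set $\{v_1,\dots,v_n,w_1,\dots,w_n\}$ and edge set $E(G)\cup\{v_iw_i:i\in[n]\}$. For a graph $H$, its facet ideal is $\mathcal{F}(H)=(x_ix_j:\{i,j\}\in E(H))$; if $\mathcal{F}(H)=\bigcap_k (x_{i_{k,1}},\dots,x_{i_{k,r_k}})$ is its primary decomposition, the cover ideal is $J(H)=(x_{i_{k,1}}\cdots x_{i_{k,r_k}}:k)$. $\langle F_1,\dots,F_s\rangle$ denotes the simplicial complex with facets $F_1,\dots,F_s$. For a simplicial complex $\Delta$ on $[N]$, with $S=\mathbb{K}[x_1,\dots,x_N]$, $\mathcal{N}(\Delta)=(x_\tau:\tau\subseteq[N],\tau\notin\Delta)$ and $A(\Delta)=S/(\mathcal{N}(\Delta)+(x_1^2,\dots,x_N^2))$. A graded artinian algebra $A$ with top nonzero degree $d$ is level if its socle $\{f: fA_1=0\}$ equals $A_d$.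 $A$ has the strong Lefschetz property if for a general linear form $L$ all maps $\times L^j:A_i\to A_{i+j}$ have full rank. *)

From HB Require Import structures.
From mathcomp Require Import all_boot all_order all_algebra.
From mathcomp Require Import mpoly.
Set Implicit Arguments.
Unset Strict Implicit.
Unset Printing Implicit Defensive.
Import GRing.Theory.
Local Open Scope ring_scope.

Definition simple_graph (n : nat) (e : rel 'I_n) : Prop :=
  (forall x y, e x y = e y x) /\ (forall x, e x x = false).

Definition bipartite (n : nat) (e : rel 'I_n) : Prop :=
  exists c : 'I_n -> bool, forall x y, e x y -> c x != c y.

(* whiskered graph w(G) on 'I_(n+n): v_i = lshift n i (index i),
   w_i = rshift n i (index n+i); edges E(G) together with v_i w_i. *)
Definition whisker (n : nat) (e : rel 'I_n) : rel 'I_(n + n) :=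
  fun u v =>
    match split u, split v with
    | inl a, inl b => e a b
    | inl a, inr b => a == b
    | inr a, inl b => a == b
    | inr _, inr _ => false
    end.

Section Ideals.
Variables (K : fieldType) (N : nat).
Local Notation S := {mpoly K[N]}.

Definition in_ideal (gens : S -> Prop) (p : S) : Prop :=
  exists s : seq (S * S),
    (forall q, q \in s -> gens q.2) /\ p = \sum_(q <- s) q.1 * q.2.

Definition ideal_sub (g1 g2 : S -> Prop) : Prop :=
  forall p, in_ideal g1 p -> in_ideal g2 p.

Definition edge_gens (H : rel 'I_N) (g : S) : Prop :=
  exists i j, H i j /\ g = 'X_i * 'X_j.

Definition var_gens (C : {set 'I_N}) (g : S) : Prop :=
  exists i, i \in C /\ g = 'X_i.

(* C indexes a component (x_i : i in C) of the (irredundant) primary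
   decomposition of F(H), i.e. a minimal prime of F(H):
   F(H) is contained in (x_i : i in C), and minimally so. *)
Definition cover_facet (H : rel 'I_N) (C : {set 'I_N}) : Prop :=
  ideal_sub (edge_gens H) (var_gens C) /\
  forall D : {set 'I_N}, D \proper C -> ~ ideal_sub (edge_gens H) (var_gens D).

(* the simplicial complex Delta = < supports of the generators of J(H) > *)
Definition cover_complex (H : rel 'I_N) (tau : {set 'I_N}) : Prop :=
  exists C, cover_facet H C /\ tau \subset C.

Definition A_gens (Delta : {set 'I_N} -> Prop) (g : S) : Prop :=
  (exists tau : {set 'I_N}, ~ Delta tau /\ g = \prod_(i in tau) 'X_i)
  \/ (exists i, g = 'X_i ^+ 2).

(* ---------- properties of the graded quotient A = S / I ----------
   Elements of A are represented by polynomials f (class f + I); the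
   degree-k component A_k is the image of the homogeneous polynomials of
   degree k.  [I] is the membership predicate of the ideal. *)

(* A is level: with d the top nonzero degree, socle(A) = A_d *)
Definition is_level (I : S -> Prop) : Prop :=
  exists d : nat,
    (exists h : S, h \is d.-homog /\ ~ I h) /\
    (forall (k : nat) (h : S), (d < k)%N -> h \is k.-homog -> I h) /\
    (forall f : S,
        (forall l : S, l \is 1.-homog -> I (f * l)) <->
        (exists h : S, h \is d.-homog /\ I (f - h))).

Definition mult_full_rank (I : S -> Prop) (L : S) (i j : nat) : Prop :=
  (forall h : S, h \is i.-homog -> I (L ^+ j * h) -> I h) \/
  (forall g : S, g \is (i + j).-homog ->
     exists h : S, h \is i.-homog /\ I (L ^+ j * h - g)).

(* strong Lefschetz property: for a general linear form L (i.e. for all L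
   whose coefficient vector lies outside the zero set of some nonzero
   polynomial P), all maps x L^j : A_i -> A_(i+j) have full rank. *)
Definition has_SLP (I : S -> Prop) : Prop :=
  exists P : S, P != 0 /\
    forall L : S, L \is 1.-homog ->
      P.@[fun k => mcoeff (mnm1 k) L] != 0 ->
      forall i j : nat, mult_full_rank I L i j.

End Ideals.

From HB Require Import structures.
From mathcomp Require Import all_boot all_order all_algebra.
From mathcomp Require Import mpoly zify.
Import GRing.Theory.
Local Open Scope ring_scope.
Set Implicit Arguments.
Unset Strict Implicit.
Unset Printing Implicit Defensive.

(* A minimal vertex cover of w(G) contains exactly one of v_i, w_i for every i, so the
   complex Delta is pure of dimension n - 1.  Hence A(Delta) is level: a face monomial of
   degree < n is not in the socle, since multiplying it by a variable of a facet containing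
   its support gives a face monomial again.

   A general linear form L = \sum_u c_u x_u has no zero coefficient.  Write L as the sum of
   the l_i = c_(v_i) x_(v_i) + c_(w_i) x_(w_i); as {v_i, w_i} is not a face, l_i^2 = 0 in
   A(Delta).  So for a != b the form l_a - l_b <> 0 of degree 1 is killed by L^(n-1), and
   x L^(n-1) : A_1 -> A_n is not injective.  If moreover a and b are not adjacent (such a
   pair exists because G is bipartite with at least 3 vertices), the substitution
   w_i := -(c_(v_i) / c_(w_i)) v_i for i = a, b, w_i := 0 otherwise, maps A(Delta) to
   K[v_1..v_n] / (v_1^2, ..., v_n^2) and L to a form in n - 2 variables, whose (n-1)-st
   power vanishes; as the facet monomial v_1 ... v_n survives, the map is not surjective
   either. *)

(** * Polynomials vanishing on an infinite field *)

Lemma mpoly_rmorph_eq (R : nzRingType) (S : pzRingType) (M : nat)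
    (f g : {rmorphism {mpoly R[M]} -> S}) :
  (forall c, f c%:MP = g c%:MP) -> (forall i, f 'X_i = g 'X_i) -> f =1 g.
Proof.
move=> fC fX p; rewrite (mpolyE p) !rmorph_sum; apply: eq_bigr => m _.
rewrite -mul_mpolyC !rmorphM fC mpolyXE_id !rmorph_prod; congr (_ * _).
by apply: eq_bigr => i _; rewrite !rmorphXn fX.
Qed.

Section Vanishing.
Variable K : fieldType.
Hypothesis K_infinite : forall s : seq K, exists x : K, x \notin s.

Lemma exists_uniq_seq k : exists s : seq K, uniq s /\ size s = k.
Proof.
elim: k => [|k [s [us ss]]]; first by exists [::].
by have [x xs] := K_infinite s; exists (x :: s); rewrite /= xs us ss.
Qed.

Lemma poly_eq0_of_vanishing (r : {poly K}) : (forall x, r.[x] = 0) -> r = 0.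
Proof.
move=> r0; have [s [us ss]] := exists_uniq_seq (size r).
apply: (roots_geq_poly_eq0 (rs := s)) => //; last by rewrite ss.
by apply/allP => x _; rewrite /root r0.
Qed.

(* The indexing matches the one [muni] uses internally for its last variable. *)
Definition extend_point N (v : 'I_N -> K) (x : K) (i : 'I_N.+1) : K :=
  if split (cast_ord (esym (addn1 N)) i) is inl j then v j else x.

Lemma meval_muni N (p : {mpoly K[N.+1]}) v x :
  p.@[extend_point v x] = (map_poly (meval v) (muni p)).[x].
Proof.
suff E : meval (extend_point v x) =1 horner_eval x \o map_poly (meval v) \o @muni N K.
  exact: E.
apply: mpoly_rmorph_eq => /=.
  by move=> c; rewrite horner_evalE mevalC muniC map_polyC hornerC /= mevalC.
move=> i; rewrite horner_evalE mevalXU /muni mmapX mmap1U /extend_point.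
case: split => j /=; first by rewrite map_polyC hornerC /= mevalXU.
by rewrite map_polyX hornerX.
Qed.

Lemma muni_eq0 N (p : {mpoly K[N.+1]}) : muni p = 0 -> p = 0.
Proof.
move=> p0.
have muniK : horner_eval 'X_ord_max \o map_poly (@mwiden N K) \o @muni N K =1 idfun.
  apply: mpoly_rmorph_eq => /=.
    by move=> c; rewrite horner_evalE muniC map_polyC hornerC /= mwidenC.
  move=> i; rewrite horner_evalE /muni mmapX mmap1U /=.
  case: splitP => j /= ij.
    rewrite map_polyC hornerC /= mwidenX mnmwiden1; congr 'X__.
    by apply: val_inj; rewrite /= -ij.
  rewrite map_polyX hornerX; congr 'X__; apply: val_inj => /=.
  by move: ij; rewrite ord1 addn0 => ->.
by rewrite -[p]muniK /= p0 map_poly0 horner_evalE horner0.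
Qed.

Lemma mpoly_eq0_of_vanishing N (p : {mpoly K[N]}) : (forall v, p.@[v] = 0) -> p = 0.
Proof.
elim: N p => [|N IH] p p0.
  have p_const : p = (p@_0)%:MP.
    apply: msize1_polyC; rewrite msizeE; apply/bigmax_leqP_seq => m _ _.
    by rewrite mdegE big_ord0.
  by rewrite p_const -[p@_0](mevalC (fun _ : 'I_0 => 0)) -p_const p0.
apply: muni_eq0; apply/polyP => j; rewrite coef0; apply: IH => v.
have muni_v0 : map_poly (meval v) (muni p) = 0.
  by apply: poly_eq0_of_vanishing => x; rewrite -meval_muni p0.
by have := congr1 (fun r : {poly K} => r`_j) muni_v0; rewrite coef_map coef0.
Qed.

End Vanishing.

(** * Ideals and monomial supports *)

Section IdealMembership.
Variables (K : fieldType) (N : nat) (g : {mpoly K[N]} -> Prop).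
Implicit Types (p q r l : {mpoly K[N]}).
Local Notation I := (in_ideal g).

Lemma in_ideal0 : I 0.
Proof. by exists [::]; split => //; rewrite big_nil. Qed.

Lemma in_idealD p q : I p -> I q -> I (p + q).
Proof.
move=> [s [gs ->]] [t [gt ->]]; exists (s ++ t); split; last by rewrite big_cat.
by move=> x; rewrite mem_cat => /orP [/gs|/gt].
Qed.

Lemma in_idealMl r p : I p -> I (r * p).
Proof.
move=> [s [gs ->]]; exists [seq (r * x.1, x.2) | x <- s]; split.
  by move=> x /mapP [y /gs gy ->].
by rewrite big_map mulr_sumr; apply: eq_bigr => x _; rewrite mulrA.
Qed.

Lemma in_idealMr r p : I p -> I (p * r).
Proof. by rewrite mulrC; apply: in_idealMl. Qed.

Lemma in_ideal_gen p : g p -> I p.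
Proof.
move=> gp; exists [:: (1, p)]; split; last by rewrite big_seq1 mul1r.
by move=> x; rewrite inE => /eqP ->.
Qed.

Lemma in_idealN p : I p -> I (- p).
Proof. by rewrite -mulN1r; apply: in_idealMl. Qed.

Lemma in_idealB p q : I p -> I q -> I (p - q).
Proof. by move=> Ip Iq; apply: in_idealD => //; apply: in_idealN. Qed.

Lemma in_idealZ c p : I p -> I (c *: p).
Proof. by rewrite -mul_mpolyC; apply: in_idealMl. Qed.

Lemma in_idealMn p k : I p -> I (p *+ k).
Proof. by rewrite -mulr_natl; apply: in_idealMl. Qed.

Lemma in_ideal_sum (J : Type) (s : seq J) (P : pred J) (F : J -> {mpoly K[N]}) :
  (forall j, P j -> I (F j)) -> I (\sum_(j <- s | P j) F j).
Proof.
move=> IF; elim/big_rec: _ => [|j x Pj Ix]; first exact: in_ideal0.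
by apply: in_idealD => //; apply: IF.
Qed.

Lemma ideal_sub_gens (g' : {mpoly K[N]} -> Prop) :
  (forall p, g' p -> I p) -> ideal_sub g' g.
Proof.
move=> g'I p [s [g's ->]]; rewrite big_seq; apply: in_ideal_sum => x xs.
by apply: in_idealMl; apply: g'I; apply: g's.
Qed.

Lemma in_ideal_exp_addr p l k : I (l ^+ 2) -> I (p ^+ k.+1) -> I ((p + l) ^+ k.+2).
Proof.
move=> Il Ip; rewrite exprDn; apply: in_ideal_sum => -[[|[|i]] ?] _; apply: in_idealMn.
- by rewrite subn0 expr0 mulr1 exprS; apply: in_idealMl.
- by rewrite /= subSS subn0; apply: in_idealMr.
- by rewrite /= -[i.+2]addn2 exprD mulrA; apply: in_idealMl.
Qed.

Lemma in_ideal_exp_sum_sqr (J : finType) (A : {set J}) (F : J -> {mpoly K[N]}) :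
  (forall j, I (F j ^+ 2)) -> I ((\sum_(j in A) F j) ^+ #|A|.+1).
Proof.
move=> IF; have [k cardA] : {k | #|A| = k} by exists #|A|.
rewrite cardA; elim: k A cardA => [|k IH] A cardA.
  by move/eqP: cardA; rewrite cards_eq0 => /eqP ->; rewrite big_set0 expr1; apply: in_ideal0.
have [j Aj] : {j | j \in A} by apply/sigW/card_gt0P; rewrite cardA.
rewrite (big_setD1 j Aj) /= addrC; apply: in_ideal_exp_addr => //; apply: IH.
by move: cardA; rewrite (cardsD1 j A) Aj => -[].
Qed.

End IdealMembership.

Section Supported.
Variables (K : fieldType) (N : nat).
Implicit Types (B : 'X_{1..N} -> Prop) (p q : {mpoly K[N]}).

Definition supported B p := forall m, m \in msupp p -> B m.

Lemma supported0 B : supported B 0.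
Proof. by move=> m; rewrite msupp0. Qed.

Lemma supportedD B p q : supported B p -> supported B q -> supported B (p + q).
Proof. by move=> Bp Bq m /msuppD_le; rewrite mem_cat => /orP [/Bp|/Bq]. Qed.

Lemma supportedZ B c p : supported B p -> supported B (c *: p).
Proof. by move=> Bp m /msuppZ_le /Bp. Qed.

Lemma supported_sum B (J : Type) (s : seq J) (P : pred J) (F : J -> {mpoly K[N]}) :
  (forall j, P j -> supported B (F j)) -> supported B (\sum_(j <- s | P j) F j).
Proof.
move=> BF; elim/big_rec: _ => [|j x Pj Bx]; first exact: supported0.
by apply: supportedD => //; apply: BF.
Qed.

Lemma supportedX B m : B m -> supported B 'X_[m].
Proof. by move=> Bm m'; rewrite msuppX inE => /eqP ->. Qed.

Lemma supportedM (B1 B2 B3 : 'X_{1..N} -> Prop) p q :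
  (forall m1 m2, B1 m1 -> B2 m2 -> B3 (m1 + m2)%MM) ->
  supported B1 p -> supported B2 q -> supported B3 (p * q).
Proof.
move=> B123 Bp Bq m /msuppM_le /allpairsP [[m1 m2] /= [m1p m2q ->]].
by apply: B123; [apply: Bp | apply: Bq].
Qed.

Lemma mcoeff_unsupported B p m : supported B p -> ~ B m -> p@_m = 0.
Proof. by move=> Bp Bm; apply/eqP; rewrite mcoeff_eq0; apply/negP => /Bp. Qed.

End Supported.

Definition lin_form (K : fieldType) (N : nat) (c : 'I_N -> K) : {mpoly K[N]} :=
  \sum_(u < N) c u *: 'X_u.

Lemma lin_form_homog (K : fieldType) (N : nat) (c : 'I_N -> K) :
  lin_form c \is 1.-homog.
Proof. by apply: rpred_sum => u _; apply: rpredZ; rewrite dhomogX /= mdeg1. Qed.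

Lemma mcoeff_lin_form (K : fieldType) (N : nat) (c : 'I_N -> K) k :
  mcoeff U_(k) (lin_form c) = c k.
Proof.
rewrite /lin_form raddf_sum /= (bigD1 k) //= mcoeffZ mcoeffXU eqxx mulr1.
by rewrite big1 ?addr0 // => u uk; rewrite mcoeffZ mcoeffXU (negbTE uk) mulr0.
Qed.

(* A point where [P * \prod_u 'X_u] does not vanish is a linear form that is general for
   [P] and has no zero coefficient. *)
Lemma not_SLP_of_nonzero_coefs (K : fieldType) (N : nat) (I : {mpoly K[N]} -> Prop) :
  (forall s : seq K, exists x : K, x \notin s) ->
  (forall c : 'I_N -> K, (forall u, c u != 0) ->
     exists i j, ~ mult_full_rank I (lin_form c) i j) ->
  ~ has_SLP I.
Proof.
move=> K_infinite fail_c [P [P_nz SLP]].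
have X_nz (u : 'I_N) : ('X_u : {mpoly K[N]}) != 0.
  apply/eqP => /(congr1 (mcoeff U_(u))).
  by rewrite mcoeffX eqxx mcoeff0 => /eqP; rewrite oner_eq0.
have /negP[] : P * \prod_(u < N) 'X_u != 0.
  by rewrite mulf_neq0 //; apply/prodf_neq0 => u _; apply: X_nz.
apply/eqP/(mpoly_eq0_of_vanishing K_infinite) => c; apply/eqP/negPn/negP.
rewrite mevalM (big_morph _ (mevalM c) (meval1 c)) mulf_eq0 negb_or.
case/andP => Pc /prodf_neq0 c_nz.
have {}c_nz u : c u != 0 by move: (c_nz u isT); rewrite mevalXU.
have PL : P.@[fun k => (lin_form c)@_U_(k)] != 0.
  by rewrite (meval_eq _ (mcoeff_lin_form c)).
have [i [j not_full]] := fail_c c c_nz.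
exact: not_full (SLP _ (lin_form_homog c) PL i j).
Qed.

Section EdgeIdeal.
Variables (K : fieldType) (N : nat) (H : rel 'I_N) (C : {set 'I_N}).

Lemma ideal_sub_edge_varP :
  ideal_sub (K:=K) (edge_gens H) (var_gens C) <->
  (forall x y, H x y -> x \in C \/ y \in C).
Proof.
split=> [sub x y Hxy|cover].
  have [Cx|Cx] := boolP (x \in C); first by left.
  have [Cy|Cy] := boolP (y \in C); first by right.
  have [s [gs xy_sum]] : in_ideal (var_gens C) ('X_x * 'X_y : {mpoly K[N]}).
    by apply: sub; apply: in_ideal_gen; exists x, y.
  pose ev := fun k : 'I_N => if k \in C then (0 : K) else 1.
  have := congr1 (meval ev) xy_sum.
  rewrite mevalM !mevalXU /ev (negbTE Cx) (negbTE Cy) mulr1 rmorph_sum /= big_seq big1.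
    by move/eqP; rewrite oner_eq0.
  by move=> q /gs [k [Ck ->]]; rewrite mevalM mevalXU /ev Ck mulr0.
apply: ideal_sub_gens => p [x [y [Hxy ->]]].
case: (cover x y Hxy) => [Cx|Cy].
  by apply: in_idealMr; apply: in_ideal_gen; exists x.
by apply: in_idealMl; apply: in_ideal_gen; exists y.
Qed.

End EdgeIdeal.

(** * The algebra A(Delta) of a simplicial complex *)

Section SquarefreeMonomials.
Variable N : nat.
Implicit Types (m : 'X_{1..N}) (t : {set 'I_N}).

Definition msqfree m := [forall u, m u <= 1]%N.

Definition mnm_supp m := [set u | m u != 0%N].

Definition mnm_of_set t := (\sum_(u in t) U_(u))%MM.

Lemma mnm_of_setE t u : mnm_of_set t u = (u \in t).
Proof.
rewrite mnm_sumE; have [ut|ut] := boolP (u \in t).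
  rewrite (bigD1 u) //= mnm1E eqxx big1 ?addn0 // => i /andP [_ iu].
  by rewrite mnm1E (negbTE iu).
by rewrite big1 // => i it; rewrite mnm1E; case: eqP ut => // <-; rewrite it.
Qed.

Lemma mnm_supp_of_set t : mnm_supp (mnm_of_set t) = t.
Proof. by apply/setP => u; rewrite inE mnm_of_setE; case: (u \in t). Qed.

Lemma msqfree_of_set t : msqfree (mnm_of_set t).
Proof. by apply/forallP => u; rewrite mnm_of_setE; case: (u \in t). Qed.

Lemma mdeg_of_set t : mdeg (mnm_of_set t) = #|t|.
Proof.
rewrite mdegE (eq_bigr (fun u => nat_of_bool (u \in t))) => [|u _]; last exact: mnm_of_setE.
by rewrite -big_mkcond /= sum1_card.
Qed.

Lemma mnm_of_supp m : msqfree m -> mnm_of_set (mnm_supp m) = m.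
Proof.
move/forallP => m_le1; apply/mnmP => u; rewrite mnm_of_setE inE.
by have := m_le1 u; case: (m u) => [|[|]].
Qed.

Lemma mpolyX_of_set (R : nzRingType) t :
  'X_[mnm_of_set t] = \prod_(u in t) 'X_u :> {mpoly R[N]}.
Proof. by rewrite mprodXE. Qed.

Lemma msqfree_addl m1 m2 : msqfree (m1 + m2)%MM -> msqfree m2.
Proof.
move/forallP => le1; apply/forallP => u.
by apply: leq_trans (le1 u); rewrite mnmDE leq_addl.
Qed.

Lemma mnm_supp_addl m1 m2 : mnm_supp m2 \subset mnm_supp (m1 + m2)%MM.
Proof.
by apply/subsetP => u; rewrite !inE mnmDE addn_eq0 negb_and orbC => ->.
Qed.

End SquarefreeMonomials.

Lemma mcoeff_pihomog (K : fieldType) N k (p : {mpoly K[N]}) m :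
  (pihomog mdeg k p)@_m = if mdeg m == k then p@_m else 0.
Proof.
have lt_m : (mdeg m < maxn (msize p) (mdeg m).+1)%N by rewrite leq_max ltnSn orbT.
rewrite (pihomogwE _ _ (leq_maxl (msize p) (mdeg m).+1)) raddf_sum /= big_mkcond /=.
rewrite (bigD1 (Sub m lt_m)) //= big1 => [|m' ne_m'].
  by rewrite addr0; case: ifP; rewrite ?mcoeffZ ?mcoeffX ?eqxx ?mulr1 ?mcoeff0.
rewrite -val_eqE /= in ne_m'.
by case: ifP; rewrite ?mcoeffZ ?mcoeffX ?mcoeff0 // (negbTE ne_m') mulr0.
Qed.

Section FaceAlgebra.
Variables (K : fieldType) (N : nat) (Delta : {set 'I_N} -> Prop).
Hypothesis Delta_down : forall t t' : {set 'I_N}, Delta t -> t' \subset t -> Delta t'.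
Local Notation I := (@in_ideal K N (A_gens Delta)).
Implicit Types (m : 'X_{1..N}) (p : {mpoly K[N]}).

Definition face_mnm m := msqfree m /\ Delta (mnm_supp m).

Lemma face_mnm_addl m1 m2 : face_mnm (m1 + m2)%MM -> face_mnm m2.
Proof.
by case=> /msqfree_addl sqf /Delta_down face; split => //; apply/face/mnm_supp_addl.
Qed.

Lemma face_mnm_of_set t : face_mnm (mnm_of_set t) <-> Delta t.
Proof.
rewrite /face_mnm mnm_supp_of_set; split=> [[] //|face].
by split; first exact: msqfree_of_set.
Qed.

Lemma A_ideal_supported p : I p -> supported (fun m => ~ face_mnm m) p.
Proof.
move=> [s [gs ->]]; rewrite big_seq; apply: supported_sum => q /gs gq.
apply: (@supportedM _ _ (fun _ => True) (fun m => ~ face_mnm m)) => //.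
  by move=> m1 m2 _ nface /face_mnm_addl.
case: gq => [[t [nface ->]]|[u ->]].
  by rewrite -mpolyX_of_set; apply: supportedX => /face_mnm_of_set.
rewrite mpolyXn; apply: supportedX => -[/forallP /(_ u)].
by rewrite mulmnE mnm1E eqxx.
Qed.

Lemma mpolyX_in_A_ideal m : ~ face_mnm m -> I 'X_[m].
Proof.
move=> nface; have [sqf|/forallPn [u]] := boolP (msqfree m).
  apply: in_ideal_gen; left; exists (mnm_supp m); split; last first.
    by rewrite -mpolyX_of_set mnm_of_supp.
  by move=> face; apply: nface.
rewrite -ltnNge => m_u; rewrite mpolyXE_id (bigD1 u) //= -(subnK m_u) exprD.
by apply/in_idealMr/in_idealMl/in_ideal_gen; right; exists u.
Qed.

Lemma in_A_idealP p : I p <-> forall m, face_mnm m -> p@_m = 0.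
Proof.
split=> [Ip m face|p0]; first exact: mcoeff_unsupported (A_ideal_supported Ip) _.
rewrite (mpolyE p) big_seq; apply: in_ideal_sum => m mp.
apply/in_idealZ/mpolyX_in_A_ideal => /p0/eqP; apply/negP.
by rewrite -mcoeff_msupp.
Qed.

Section Pure.
Variable d : nat.
Hypothesis face_card : forall t, Delta t -> (#|t| <= d)%N.
Hypothesis face_extend :
  forall t, Delta t -> (#|t| < d)%N -> exists2 u, u \notin t & Delta (u |: t).
Hypothesis facet_exists : exists2 t, Delta t & #|t| = d.

Lemma face_mnm_mdeg m : face_mnm m -> (mdeg m <= d)%N.
Proof. by case=> sqf /face_card; rewrite -mdeg_of_set mnm_of_supp. Qed.

Lemma A_ideal_homog_gt k p : (d < k)%N -> p \is k.-homog -> I p.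
Proof.
move=> dk /dhomogP pk; apply/in_A_idealP => m face.
apply/eqP; rewrite mcoeff_eq0; apply/negP => /pk mk.
by move: (face_mnm_mdeg face); rewrite mk leqNgt dk.
Qed.

Lemma face_mnm_extend m : face_mnm m -> mdeg m != d ->
  exists u, face_mnm (U_(u) + m)%MM.
Proof.
move=> [sqf face] mdeg_m.
have lt_d : (#|mnm_supp m| < d)%N.
  by rewrite -mdeg_of_set mnm_of_supp // ltn_neqAle mdeg_m face_mnm_mdeg.
have [u u_m face_u] := face_extend face lt_d; exists u.
suff -> : (U_(u) + m)%MM = mnm_of_set (u |: mnm_supp m) by apply/face_mnm_of_set.
apply/mnmP => x; rewrite mnmDE mnm1E mnm_of_setE -{1}(mnm_of_supp sqf) mnm_of_setE !inE.
by move: u_m; rewrite inE => /negbTE u_m; have [<-|] := eqVneq u x; rewrite ?u_m.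
Qed.

Lemma A_level_of_pure : is_level I.
Proof.
exists d; split.
  have [t face <-] := facet_exists; exists 'X_[mnm_of_set t]; split.
    by rewrite dhomogX /= mdeg_of_set.
  move/in_A_idealP/(_ (mnm_of_set t)); rewrite mcoeffX eqxx => /(_ _)/eqP.
  by rewrite oner_eq0 => /(_ (iffRL (face_mnm_of_set t) face)).
split=> [k p|f]; first exact: A_ideal_homog_gt.
split=> [socle|[h [h_d Ifh]] l l_1]; last first.
  rewrite -(subrK h f) mulrDl; apply: in_idealD; first exact: in_idealMr.
  by apply: (@A_ideal_homog_gt (d + 1)); [rewrite addn1 | apply: dhomogM].
exists (pihomog mdeg d f); split; first exact: pihomogP.
apply/in_A_idealP => m face; rewrite mcoeffB mcoeff_pihomog.
case: eqP => [_|/eqP mdeg_m]; first by rewrite subrr.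
have [u face_u] := face_mnm_extend face mdeg_m.
have /in_A_idealP/(_ _ face_u) : I (f * 'X_u) by apply: socle; rewrite dhomogX /= mdeg1.
by rewrite mcoeffMX => ->; rewrite subr0.
Qed.

End Pure.

End FaceAlgebra.

(** * The cover complex of a whiskered graph *)

Lemma cover_complex_down (K : fieldType) (N : nat) (H : rel 'I_N) (t t' : {set 'I_N}) :
  cover_complex K H t -> t' \subset t -> cover_complex K H t'.
Proof.
by move=> [C [facet_C tC]] t't; exists C; split => //; apply: subset_trans tC.
Qed.

Section Whisker.
Variables (n : nat) (e : rel 'I_n).
Local Notation v := (@lshift n n).
Local Notation w := (@rshift n n).

Lemma split_lshift i : split (v i) = inl i. Proof. exact: (unsplitK (inl i)). Qed.
Lemma split_rshift i : split (w i) = inr i. Proof. exact: (unsplitK (inr i)). Qed.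

Lemma lshift_or_rshift (u : 'I_(n + n)) : (exists i, u = v i) \/ (exists i, u = w i).
Proof. by rewrite -(splitK u); case: split => i; [left|right]; exists i. Qed.

Lemma whisker_lrshift i : whisker e (v i) (w i).
Proof. by rewrite /whisker split_lshift split_rshift. Qed.

Lemma whisker_rshiftl i y : whisker e (w i) y -> y = v i.
Proof.
case: (lshift_or_rshift y) => -[j ->]; rewrite /whisker split_rshift;
  by rewrite ?split_lshift ?split_rshift // => /eqP ->.
Qed.

Lemma whisker_rshiftr i x : whisker e x (w i) -> x = v i.
Proof.
case: (lshift_or_rshift x) => -[j ->]; rewrite /whisker split_rshift;
  by rewrite ?split_lshift ?split_rshift // => /eqP ->.
Qed.

Definition independent (T : {set 'I_n}) := {in T &, forall x y, ~~ e x y}.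

(* The minimal vertex cover of w(G) whose whiskers w_i are indexed by T. *)
Definition indep_facet (T : {set 'I_n}) : {set 'I_(n + n)} :=
  [set u | match split u with inl i => i \notin T | inr i => i \in T end].

Variable K : fieldType.
Local Notation facet := (@cover_facet K (n + n) (whisker e)).
Local Notation face := (@cover_complex K (n + n) (whisker e)).

Lemma whisker_facet_mem C : facet C -> forall i, v i \in C \/ w i \in C.
Proof. by move=> [/ideal_sub_edge_varP cover _] i; apply/cover/whisker_lrshift. Qed.

Lemma whisker_facet_notboth C : facet C -> forall i, v i \in C -> w i \notin C.
Proof.
move=> [/ideal_sub_edge_varP cover minC] i vC; apply/negP => wC.
apply: (minC (C :\ w i)); first by rewrite properD1.
apply/ideal_sub_edge_varP => x y xy; rewrite !inE.
have [x_w|x_w] := eqVneq x (w i).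
  by right; move: xy; rewrite x_w => /whisker_rshiftl ->; rewrite eq_lrshift vC.
have [y_w|y_w] := eqVneq y (w i).
  by left; move: xy; rewrite y_w => /whisker_rshiftr ->; rewrite vC.
exact: cover.
Qed.

Lemma card_whisker_facet C : facet C -> #|C| = n.
Proof.
move=> facet_C; pose f i := if v i \in C then v i else w i.
have f_inj : injective f.
  apply: (@can_inj _ _ _ (fun u => match split u with inl i | inr i => i end)) => i.
  by rewrite /f; case: ifP; rewrite ?split_lshift ?split_rshift.
suff -> : C = f @: [set: 'I_n] by rewrite card_imset // cardsT card_ord.
apply/setP => u; apply/idP/imsetP => [uC|[i _ ->]]; last first.
  rewrite /f; case: ifP => // /negbT vC.
  by case: (whisker_facet_mem facet_C i); rewrite ?(negbTE vC).
case: (lshift_or_rshift u) uC => -[i ->] uC; exists i => //; rewrite /f ?uC //.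
by rewrite (negbTE (contraL (whisker_facet_notboth facet_C (i:=i)) uC)).
Qed.

Lemma mem_indep_facet_l T i : (v i \in indep_facet T) = (i \notin T).
Proof. by rewrite inE split_lshift. Qed.

Lemma mem_indep_facet_r T i : (w i \in indep_facet T) = (i \in T).
Proof. by rewrite inE split_rshift. Qed.

Lemma indep_facetP T : independent T -> facet (indep_facet T).
Proof.
move=> indepT; split.
  apply/ideal_sub_edge_varP => x y; rewrite /whisker !inE.
  case: (split x) => i; case: (split y) => j //; last first.
  - by move/eqP => <-; case: (boolP (i \in T)); [left | right].
  - by move/eqP => <-; case: (boolP (i \in T)); [right | left].
  move=> eij; case: (boolP (i \in T)) => iT; last by left.
  case: (boolP (j \in T)) => jT; last by right.
  by move: eij; rewrite (negbTE (indepT i j iT jT)).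
move=> D /properP [DF [u uF uD]] /ideal_sub_edge_varP cover.
have DF' x : x \in D -> x \in indep_facet T by apply/subsetP.
case: (lshift_or_rshift u) uF uD => -[i ->].
  rewrite mem_indep_facet_l => iT vD; case: (cover _ _ (whisker_lrshift i)) => [|/DF'].
    by rewrite (negbTE vD).
  by rewrite mem_indep_facet_r (negbTE iT).
rewrite mem_indep_facet_r => iT wD; case: (cover _ _ (whisker_lrshift i)) => [/DF'|].
  by rewrite mem_indep_facet_l iT.
by rewrite (negbTE wD).
Qed.

Lemma whisker_face_card t : face t -> (#|t| <= n)%N.
Proof.
by move=> [C [facet_C /subset_leq_card]]; rewrite (card_whisker_facet facet_C).
Qed.

Lemma whisker_face_extend t :
  face t -> (#|t| < n)%N -> exists2 u, u \notin t & face (u |: t).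
Proof.
move=> [C [facet_C tC]] lt_t_n.
have /subsetPn [u uC ut] : ~~ (C \subset t).
  by apply: contraTN lt_t_n => /subset_leq_card; rewrite (card_whisker_facet facet_C) leqNgt.
by exists u => //; exists C; split => //; rewrite subUset sub1set uC tC.
Qed.

Lemma whisker_face_pair i : ~ face [set v i; w i].
Proof.
move=> [C [facet_C /subsetP tC]].
have /(whisker_facet_notboth facet_C) : v i \in C by apply: tC; rewrite !inE eqxx.
by rewrite tC // !inE eqxx orbT.
Qed.

Lemma whisker_face_of_indep (U : {set 'I_n}) (t : {set 'I_(n + n)}) : independent U ->
  (forall i, w i \in t -> i \in U) -> (forall i, v i \in t -> w i \notin t) ->
  face t.
Proof.
move=> indepU wU vw; pose T := [set i | w i \in t].
have indepT : independent T by move=> x y; rewrite !inE => /wU xU /wU yU; apply: indepU.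
exists (indep_facet T); split; first exact: indep_facetP.
apply/subsetP => u; case: (lshift_or_rshift u) => -[i ->] ut.
  by rewrite mem_indep_facet_l inE vw.
by rewrite mem_indep_facet_r inE.
Qed.

Lemma whisker_face_lshift : face (v @: [set: 'I_n]).
Proof.
have wv i : w i \notin v @: [set: 'I_n].
  by apply/imsetP => -[j _ /eqP]; rewrite eq_rlshift.
by apply: (@whisker_face_of_indep set0) => [x y|i /(negP (wv i))|i _]; rewrite ?inE.
Qed.

Theorem whisker_level : @is_level K (n + n) (in_ideal (A_gens face)).
Proof.
apply: (@A_level_of_pure _ _ _ (@cover_complex_down _ _ _) n).
- exact: whisker_face_card.
- exact: whisker_face_extend.
exists (v @: [set: 'I_n]); first exact: whisker_face_lshift.
by rewrite card_imset ?cardsT ?card_ord //; apply: lshift_inj.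
Qed.

End Whisker.

(** * Failure of the strong Lefschetz property *)

Section WhiskerNotSLP.
Variables (K : fieldType) (n : nat) (e : rel 'I_n) (a b : 'I_n).
Hypotheses (ab : a != b) (indep_ab : independent e [set a; b]).
Variable c : 'I_(n + n) -> K.
Hypothesis c_nz : forall u, c u != 0.

Local Notation v := (@lshift n n).
Local Notation w := (@rshift n n).
Local Notation face := (@cover_complex K (n + n) (whisker e)).
Local Notation I := (@in_ideal K (n + n) (A_gens face)).
Local Notation L := (lin_form c).

Lemma n_gt1 : (1 < n)%N.
Proof. by move: (ltn_ord a) (ltn_ord b) ab; rewrite -val_eqE /=; lia. Qed.

Definition pair_form i : {mpoly K[n + n]} := c (v i) *: 'X_(v i) + c (w i) *: 'X_(w i).

Lemma lin_form_pairs : L = \sum_(i < n) pair_form i.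
Proof. by rewrite /lin_form big_split_ord /= -big_split. Qed.

Lemma pair_form_sqr i : I (pair_form i ^+ 2).
Proof.
have vw : v i != w i by rewrite eq_lrshift.
rewrite sqrrD; apply: in_idealD; first apply: in_idealD.
- by rewrite exprZn; apply/in_idealZ/in_ideal_gen; right; exists (v i).
- rewrite mulr2n -scalerAl -scalerAr.
  have vw_in : I ('X_(v i) * 'X_(w i)).
    apply: in_ideal_gen; left; exists [set v i; w i]; split; first exact: whisker_face_pair.
    by rewrite big_setU1 ?inE //= big_set1.
  by apply: in_idealD; apply/in_idealZ/in_idealZ.
- by rewrite exprZn; apply/in_idealZ/in_ideal_gen; right; exists (w i).
Qed.

Definition kernel_form := pair_form a - pair_form b.

Lemma kernel_form_homog : kernel_form \is 1.-homog.
Proof. by apply: rpredB; apply: rpredD; apply: rpredZ; rewrite dhomogX /= mdeg1. Qed.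

(* Split L into the n - 2 pairs other than a, b, whose sum is killed by the power
   n - 1, and [pair_form a + pair_form b], whose product with [kernel_form] is a
   difference of two squares. *)
Lemma lin_form_exp_kernel : I (L ^+ (n - 1) * kernel_form).
Proof.
pose R := ~: [set a; b].
have card_R : #|R| = (n - 2)%N by rewrite cardsCs setCK cards2 ab card_ord.
have -> : L = \sum_(i in R) pair_form i + (pair_form a + pair_form b).
  rewrite lin_form_pairs (bigD1 a) //= (bigD1 b) 1?eq_sym //= addrA addrC; congr (_ + _).
  by apply: eq_bigl => i; rewrite !inE negb_or andbC.
rewrite exprDn mulr_suml; apply: in_ideal_sum => -[[|j] ?] _.
all: rewrite mulrnAl; apply: in_idealMn.
  rewrite subn0 expr0 mulr1; apply: in_idealMr.
  have -> : (n - 1 = #|R|.+1)%N by rewrite card_R; have := n_gt1; lia.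
  exact: in_ideal_exp_sum_sqr pair_form_sqr.
rewrite exprSr -!mulrA; apply/in_idealMl/in_idealMl.
by rewrite /kernel_form mulrC -subr_sqr; apply: in_idealB; apply: pair_form_sqr.
Qed.

Lemma kernel_form_notin : ~ I kernel_form.
Proof.
have face_va : face_mnm face U_(v a)%MM.
  have -> : U_(v a)%MM = mnm_of_set [set v a] by rewrite /mnm_of_set big_set1.
  apply/face_mnm_of_set.
  apply: cover_complex_down (whisker_face_lshift e K) _.
  by rewrite sub1set imset_f.
move/(in_A_idealP (@cover_complex_down _ _ _))/(_ _ face_va).
rewrite /kernel_form /pair_form !mcoeffB !mcoeffD !mcoeffZ !mcoeffXU eqxx eq_rlshift.
rewrite (inj_eq (@lshift_inj _ _)) eq_sym (negbTE ab) eq_rlshift !mulr0 mulr1 !addr0 subr0.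
by move/eqP; rewrite (negbTE (c_nz _)).
Qed.

(* The substitution kills the pairs a, b of L and, since a and b are not adjacent, maps
   every generator of the ideal to a polynomial without squarefree monomials. *)
Definition squash_var (u : 'I_(n + n)) : {mpoly K[n]} :=
  match split u with
  | inl i => 'X_i
  | inr i => if i \in [set a; b] then (- c (v i) / c (w i)) *: 'X_i else 0
  end.

Local Notation squash := (mmap (@mpolyC n K) squash_var).

Lemma squashX u : squash 'X_u = squash_var u.
Proof. by rewrite mmapX mmap1U. Qed.

Local Notation nsqfree := (fun m : 'X_{1..n} => ~~ msqfree m).

Lemma nsqfree_sqr i : supported nsqfree (('X_i : {mpoly K[n]}) ^+ 2).
Proof.
rewrite mpolyXn; apply: supportedX; apply/forallPn; exists i.
by rewrite mulmnE mnm1E eqxx.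
Qed.

Lemma nsqfree_addl (m1 m2 : 'X_{1..n}) : ~~ msqfree m2 -> ~~ msqfree (m1 + m2)%MM.
Proof. exact/contra/msqfree_addl. Qed.

Lemma squash_gen g : A_gens face g -> supported nsqfree (squash g).
Proof.
case=> [[t [nface ->]]|[u ->]]; last first.
  rewrite rmorphXn /= squashX /squash_var.
  case: split => i; first exact: nsqfree_sqr.
  case: ifP => _; last by rewrite expr2 mul0r; apply: supported0.
  by rewrite exprZn; apply: supportedZ; apply: nsqfree_sqr.
rewrite rmorph_prod /=.
have [i /andP [wt iab]|wab] := pickP (fun i => (w i \in t) && (i \notin [set a; b])).
  rewrite (bigD1 (w i)) //= squashX /squash_var split_rshift (negbTE iab) mul0r.
  exact: supported0.
have [i /andP [vt wt]|vw] := pickP (fun i => (v i \in t) && (w i \in t)); last first.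
  exfalso; apply: nface; apply: (whisker_face_of_indep K indep_ab).
    by move=> i wt; move: (wab i); rewrite wt /= => /negbFE.
  by move=> i vt; move: (vw i); rewrite vt => /negbT.
rewrite (bigD1 (v i)) //= (bigD1 (w i)) /=; last by rewrite wt eq_sym eq_lrshift.
rewrite !squashX /squash_var split_lshift split_rshift.
have iab : i \in [set a; b] by move: (wab i); rewrite wt /= => /negbFE.
rewrite iab mulrA -scalerAr -expr2.
apply: (@supportedM _ _ nsqfree (fun _ => True)) => //.
  by move=> m1 m2 nsq _; rewrite addmC; apply: nsqfree_addl.
by apply: supportedZ; apply: nsqfree_sqr.
Qed.

Lemma squash_A_ideal p : I p -> supported nsqfree (squash p).
Proof.
move=> [s [gs ->]]; rewrite raddf_sum /= big_seq; apply: supported_sum => q /gs gq.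
rewrite rmorphM; apply: (@supportedM _ _ (fun _ => True) nsqfree) => //.
  by move=> m1 m2 _; apply: nsqfree_addl.
exact: squash_gen.
Qed.

Definition heavy_on (W : {set 'I_n}) k (m : 'X_{1..n}) :=
  ~~ msqfree m || (k <= \sum_(i in W) m i)%N.

Lemma heavy_on_add W k1 k2 m1 m2 :
  heavy_on W k1 m1 -> heavy_on W k2 m2 -> heavy_on W (k1 + k2) (m1 + m2)%MM.
Proof.
rewrite /heavy_on; case/orP=> [nsq1|h1]; first by rewrite addmC nsqfree_addl.
case/orP=> [nsq2|h2]; first by rewrite nsqfree_addl.
apply/orP; right.
by rewrite (eq_bigr _ (fun i _ => mnmDE i m1 m2)) big_split /= leq_add.
Qed.

Lemma squash_lin_form : supported (heavy_on (~: [set a; b]) 1) (squash L).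
Proof.
rewrite lin_form_pairs raddf_sum /=; apply: supported_sum => i _.
rewrite /pair_form rmorphD /= !mmapZ !mul_mpolyC !squashX /squash_var.
rewrite split_lshift split_rshift; case: ifP => iab.
  rewrite scalerA -scalerDl mulrCA divff ?c_nz // mulr1 subrr scale0r.
  exact: supported0.
rewrite scaler0 addr0; apply: supportedZ; apply: supportedX; apply/orP; right.
have iW : i \in ~: [set a; b] by rewrite inE iab.
by rewrite (bigD1 i iW) /= mnmE eqxx.
Qed.

Lemma squash_lin_form_exp k : supported (heavy_on (~: [set a; b]) k) (squash L ^+ k).
Proof.
elim: k => [|k IHk]; first by rewrite expr0 => m _; apply/orP; right.
by rewrite exprS -add1n; apply: supportedM squash_lin_form IHk; apply: heavy_on_add.
Qed.

Local Notation all_v := (mnm_of_set (v @: [set: 'I_n])).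
Local Notation all_x := (mnm_of_set [set: 'I_n]).

Lemma squash_all_v : squash 'X_[all_v] = 'X_[all_x].
Proof.
rewrite !mpolyX_of_set rmorph_prod big_imset /=; last by move=> i j _ _; apply: lshift_inj.
by apply: eq_bigr => i _; rewrite squashX /squash_var split_lshift.
Qed.

(* The all-ones monomial of K[x_1..x_n] is squarefree but has degree n - 2 < n - 1 on
   the variables other than x_a, x_b. *)
Lemma coker_form_notin h : ~ I (L ^+ (n - 1) * h - 'X_[all_v]).
Proof.
move/squash_A_ideal => nsq.
have : (squash (L ^+ (n - 1) * h - 'X_[all_v]))@_all_x = 0.
  by apply: (mcoeff_unsupported nsq); rewrite /= msqfree_of_set.
rewrite rmorphB rmorphM rmorphXn /= mcoeffB squash_all_v mcoeffX eqxx.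
have heavy : supported (heavy_on (~: [set a; b]) (n - 1)) (squash L ^+ (n - 1) * squash h).
  rewrite -{1}[(n - 1)%N]addn0.
  apply: (supportedM (@heavy_on_add _ (n - 1)%N 0) (squash_lin_form_exp (k := (n - 1)%N))).
  by move=> m _; apply/orP; right.
rewrite (mcoeff_unsupported heavy) ?sub0r => [/eqP|]; first by rewrite oppr_eq0 oner_eq0.
rewrite /heavy_on msqfree_of_set /= (eq_bigr (fun _ => 1%N)) => [|i _]; last first.
  by rewrite mnm_of_setE in_setT.
by rewrite sum1_card cardsCs setCK cards2 ab card_ord; have := n_gt1; lia.
Qed.

Theorem whisker_not_full_rank : ~ mult_full_rank I L 1%N (n - 1)%N.
Proof.
case=> [inj|surj].
  exact/kernel_form_notin/inj/lin_form_exp_kernel/kernel_form_homog.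
have all_v_homog : ('X_[all_v] : {mpoly K[n + n]}) \is (1 + (n - 1))%N.-homog.
  rewrite dhomogX /= mdeg_of_set card_imset ?cardsT ?card_ord; last exact: lshift_inj.
  by have := n_gt1; lia.
by have [h [_ /coker_form_notin]] := surj _ all_v_homog.
Qed.

End WhiskerNotSLP.

Lemma bipartite_indep_pair (n : nat) (e : rel 'I_n) :
  simple_graph e -> bipartite e -> (3 <= n)%N ->
  exists a b : 'I_n, a != b /\ independent e [set a; b].
Proof.
move=> [_ e_irr] [col col_e] n_ge3.
have indep x y : col x = col y -> independent e [set x; y].
  move=> cxy u u'; rewrite !inE => /orP [] /eqP -> /orP [] /eqP ->; rewrite ?e_irr //;
  by apply/negP => /col_e; rewrite cxy eqxx.
pose i0 := Ordinal (leq_trans (isT : 0 < 3)%N n_ge3).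
pose i1 := Ordinal (leq_trans (isT : 1 < 3)%N n_ge3).
pose i2 := Ordinal (leq_trans (isT : 2 < 3)%N n_ge3).
have [c01|c01] := eqVneq (col i0) (col i1); first by exists i0, i1; split; last exact: indep.
have [c02|c02] := eqVneq (col i0) (col i2); first by exists i0, i2; split; last exact: indep.
exists i1, i2; split => //; apply: indep.
by move: c01 c02; case: (col i0) (col i1) (col i2) => [] [] [].
Qed.

Unset Implicit Arguments.
Set Strict Implicit.
Theorem corollary5p13 (K : fieldType) (n : nat) (e : rel 'I_n)
  (K_infinite : forall s : seq K, exists x : K, x \notin s)
  (K_char0 : [pchar K] =i pred0)
  (G_simple : simple_graph e) (G_bip : bipartite e) (n_ge5 : (5 <= n)%N) :
  @is_level K (n + n) (in_ideal (A_gens (@cover_complex K (n + n) (whisker e))))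
  /\ ~ @has_SLP K (n + n) (in_ideal (A_gens (@cover_complex K (n + n) (whisker e)))).
Proof.
split; first exact: whisker_level.
have [a [b [ab indep_ab]]] := bipartite_indep_pair G_simple G_bip (ltnW (ltnW n_ge5)).
apply: (not_SLP_of_nonzero_coefs K_infinite) => c c_nz.
by exists 1%N, (n - 1)%N; exact (whisker_not_full_rank ab indep_ab c_nz).
Qed.
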